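(* In the setting described in the context, let $\bar\eta>0$ satisfy $g(\mathbf Q)-g(\mathbf X)\ge\bar\eta\,d_F^2(\mathbf X,\mathbf Q)$ for all $\mathbf X\in\mathrm{St}(d,K)$. If $\hat{\mathbf X}$ is a global optimal solution of $\max_{\mathbf X\in\mathrm{St}(d,K)}f(\mathbf X)$, where $f(\mathbf X)=g(\mathbf X)+\sum_{k=1}^K\mathbf x_k^\top\Delta_k\mathbf x_k$, then $$d_F(\hat{\mathbf X},\mathbf Q)\le\frac{2\sqrt K}{\bar\eta}\max_{k\in[K]}\|\Delta_k\|.$$
   Context: $d>K\ge1$, $\mathrm{St}(d,K)=\{\mathbf X\in\mathbb R^{d\times K}:\mathbf X^\top\mathbf X=\mathbf I_K\}$, $\mathbf Q\in\mathrm{St}(d,K)$, $\lambda_1>\dots>\lambda_K>0$, $\boldsymbol\Theta=\mathrm{diag}(\sqrt{\lambda_1},\dots,\sqrt{\lambda_K})$. Integers $L\ge1$, $n_1,\dots,n_L\ge1$, $n=\sum_ln_l$; $v_1>\dots>v_L>0$; data $\mathbf y_{l,i}=\mathbf Q\boldsymbol\Theta\mathbf z_{l,i}+\boldsymbol\eta_{l,i}\in\mathbb R^d$ with $\mathbf z_{l,i}$ i.i.d. $\mathcal N(\mathbf0,\mathbf I_K)$ independent of $\boldsymbol\eta_{l,i}$ i.i.d. $\mathcal N(\mathbf0,v_l\mathbf I_d)$. $w_{l,k}=\lambda_k/(\lambda_k+v_l)$, $a_k=\sum_lw_{l,k}\frac{n_l}{n}\frac1{v_l}$, $\gamma_k=\sum_lw_{l,k}\frac{n_l}{n}$,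 $\mathbf M_k=\frac1n\sum_l\sum_i\frac{w_{l,k}}{v_l}\mathbf y_{l,i}\mathbf y_{l,i}^\top-\gamma_k\mathbf I_d$, $\Delta_k=\mathbf M_k-a_k\mathbf Q\boldsymbol\Theta^2\mathbf Q^\top$ ($\|\cdot\|$ operator norm). $g(\mathbf X)=\mathrm{tr}(\mathbf X^\top\mathbf Q\boldsymbol\Theta^2\mathbf Q^\top\mathbf X\,\mathrm{diag}(a_1,\dots,a_K))$, $\mathbf x_k$ is the $k$-th column of $\mathbf X$, $d_F(\mathbf X,\mathbf Q)=\min_{\mathbf q\in\{\pm1\}^K}\|\mathbf X-\mathbf Q\,\mathrm{diag}(\mathbf q)\|_F$. *)

From HB Require Import structures.
From mathcomp Require Import all_boot all_order all_algebra.
From mathcomp Require Import classical_sets reals.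
Set Implicit Arguments. Unset Strict Implicit. Unset Printing Implicit Defensive.
Import Order.TTheory GRing.Theory Num.Theory.
Local Open Scope classical_set_scope.
Local Open Scope ring_scope.

Section Defs.
Variable R : realType.

Definition vnorm (n : nat) (x : 'cV[R]_n) : R := Num.sqrt (\sum_i x i 0 ^+ 2).

Definition opnorm (m n : nat) (A : 'M[R]_(m, n)) : R :=
  sup [set vnorm (A *m x) | x in [set x : 'cV[R]_n | vnorm x = 1]].

Definition frob (m n : nat) (A : 'M[R]_(m, n)) : R :=
  Num.sqrt (\sum_i \sum_j A i j ^+ 2).

Definition stiefel (d K : nat) (X : 'M[R]_(d, K)) : Prop := X^T *m X = 1%:M.

Definition signv (K : nat) (q : {ffun 'I_K -> bool}) : 'M[R]_K :=
  diag_mx (\row_k (if q k then -1 else 1)).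

Definition dF (d K : nat) (X Q : 'M[R]_(d, K)) : R :=
  \big[Num.min/frob (X - Q)]_(q : {ffun 'I_K -> bool}) frob (X - Q *m signv q).

Section Model.
Variables (d K L : nat) (ns : 'I_L -> nat) (v : 'I_L -> R) (lam : 'I_K -> R)
  (Q : 'M[R]_(d, K))
  (z : forall l : 'I_L, 'I_(ns l) -> 'cV[R]_K)
  (eta : forall l : 'I_L, 'I_(ns l) -> 'cV[R]_d).

Definition Theta : 'M[R]_K := diag_mx (\row_k Num.sqrt (lam k)).
Definition ydat (l : 'I_L) (i : 'I_(ns l)) : 'cV[R]_d := Q *m Theta *m @z l i + @eta l i.
Definition ntot : nat := \sum_l ns l.
Definition wgt (l : 'I_L) (k : 'I_K) : R := lam k / (lam k + v l).
Definition acoef (k : 'I_K) : R :=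
  \sum_l wgt l k * ((ns l)%:R / ntot%:R) * (v l)^-1.
Definition gamma (k : 'I_K) : R := \sum_l wgt l k * ((ns l)%:R / ntot%:R).
Definition Mk (k : 'I_K) : 'M[R]_d :=
  (ntot%:R)^-1 *: (\sum_l \sum_(i < ns l)
       (wgt l k / v l) *: (ydat i *m (ydat i)^T)) - (gamma k)%:M.
Definition Delta (k : 'I_K) : 'M[R]_d :=
  Mk k - acoef k *: (Q *m (Theta *m Theta) *m Q^T).
Definition gobj (X : 'M[R]_(d, K)) : R :=
  \tr (X^T *m Q *m (Theta *m Theta) *m Q^T *m X *m diag_mx (\row_k acoef k)).
Definition fobj (X : 'M[R]_(d, K)) : R :=
  gobj X + \sum_k ((col k X)^T *m Delta k *m col k X) 0 0.
End Model.
End Defs.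

Arguments ydat {R d K L} ns lam Q z eta l i.
Arguments Mk {R d K L} ns v lam Q z eta k.
Arguments Delta {R d K L} ns v lam Q z eta k.
Arguments fobj {R d K L} ns v lam Q z eta X.
Arguments gobj {R d K L} ns v lam Q X.

From HB Require Import structures.
From mathcomp Require Import all_boot all_order all_algebra.
From mathcomp Require Import classical_sets reals.
From mathcomp Require Import ring lra.
Import Order.TTheory GRing.Theory Num.Theory.
Set Implicit Arguments. Unset Strict Implicit.
Local Open Scope ring_scope.

(* Let Q' = Q diag(q) be the sign flip of Q closest to Xhat, so that
   d_F(Xhat, Q) = |Xhat - Q'|_F.  Quadratic forms x |-> x^T D x do not see the
   sign of x, so f(Q) <= f(Xhat) yields
     g(Q) - g(Xhat) <= sum_k (xhat_k^T D_k xhat_k - q'_k^T D_k q'_k).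
   For unit vectors x, p one has x^T D x - p^T D p = x^T D (x - p) + (x - p)^T D p
   <= 2 |D| |x - p|, and by Cauchy-Schwarz sum_k |xhat_k - q'_k| <= sqrt K |Xhat - Q'|_F.
   With the growth condition this gives etabar d_F^2 <= 2 sqrt K max_k |D_k| d_F.
   Nothing about the data model is used beyond f = g + sum_k x_k^T D_k x_k. *)

Lemma sum_mul_sqr_le (R : realDomainType) n (a b : 'I_n -> R) :
  (\sum_i a i * b i) ^+ 2 <= (\sum_i a i ^+ 2) * (\sum_i b i ^+ 2).
Proof.
have lagrange : \sum_i \sum_j (a i * b j - a j * b i) ^+ 2 =
    2 * ((\sum_i a i ^+ 2) * (\sum_i b i ^+ 2) - (\sum_i a i * b i) ^+ 2).
  have sqrE : (\sum_i a i ^+ 2) * (\sum_i b i ^+ 2) =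
      \sum_i \sum_j a i ^+ 2 * b j ^+ 2.
    by rewrite mulr_suml; apply: eq_bigr => i _; rewrite mulr_sumr.
  have sqrE' : (\sum_i a i ^+ 2) * (\sum_i b i ^+ 2) =
      \sum_i \sum_j a j ^+ 2 * b i ^+ 2.
    by rewrite sqrE exchange_big.
  have dotE : (\sum_i a i * b i) ^+ 2 = \sum_i \sum_j (a i * b i) * (a j * b j).
    by rewrite expr2 mulr_suml; apply: eq_bigr => i _; rewrite mulr_sumr.
  rewrite mulrBr mulr_natl mulr2n {1}sqrE sqrE' dotE.
  rewrite -mulr_natl mulr_sumr -!big_split -sumrB /=; apply: eq_bigr => i _.
  rewrite mulr_sumr -!big_split -sumrB /=; apply: eq_bigr => j _.
  ring.
have : 0 <= \sum_i \sum_j (a i * b j - a j * b i) ^+ 2.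
  by apply: sumr_ge0 => i _; apply: sumr_ge0 => j _; exact: sqr_ge0.
by rewrite lagrange pmulr_rge0 // subr_ge0.
Qed.

Lemma normr_sum_mul_le (R : rcfType) n (a b : 'I_n -> R) :
  `|\sum_i a i * b i| <= Num.sqrt (\sum_i a i ^+ 2) * Num.sqrt (\sum_i b i ^+ 2).
Proof.
rewrite -sqrtr_sqr -sqrtrM; last by apply: sumr_ge0 => i _; exact: sqr_ge0.
exact/ler_wsqrtr/sum_mul_sqr_le.
Qed.

Section Norms.
Variable R : realType.

Definition qform n (A : 'M[R]_n) (x : 'cV[R]_n) : R := (x^T *m A *m x) 0 0.

Lemma vnorm_ge0 n (x : 'cV[R]_n) : 0 <= vnorm x.
Proof. exact: sqrtr_ge0. Qed.

Lemma sqr_vnorm n (x : 'cV[R]_n) : vnorm x ^+ 2 = \sum_i x i 0 ^+ 2.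
Proof. by rewrite sqr_sqrtr //; apply: sumr_ge0 => i _; exact: sqr_ge0. Qed.

Lemma vnormZ n (c : R) (x : 'cV[R]_n) : vnorm (c *: x) = `|c| * vnorm x.
Proof.
rewrite /vnorm; under eq_bigr => i _ do rewrite mxE exprMn.
by rewrite -mulr_sumr sqrtrM ?sqr_ge0 // sqrtr_sqr.
Qed.

Lemma normr_dot_le n (u w : 'cV[R]_n) : `|(u^T *m w) 0 0| <= vnorm u * vnorm w.
Proof.
have -> : (u^T *m w) 0 0 = \sum_i u i 0 * w i 0.
  by rewrite mxE; apply: eq_bigr => i _; rewrite mxE.
exact: normr_sum_mul_le.
Qed.

Lemma frob_ge0 m n (A : 'M[R]_(m, n)) : 0 <= frob A.
Proof. exact: sqrtr_ge0. Qed.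

Lemma vnorm_mul_frob m n (A : 'M[R]_(m, n)) (x : 'cV[R]_n) :
  vnorm (A *m x) <= frob A * vnorm x.
Proof.
rewrite /vnorm /frob -sqrtrM; last first.
  by apply: sumr_ge0 => i _; apply: sumr_ge0 => j _; exact: sqr_ge0.
apply: ler_wsqrtr; rewrite mulr_suml; apply: ler_sum => i _.
rewrite mxE; exact: sum_mul_sqr_le.
Qed.

Lemma vnorm_mul_opnorm m n (A : 'M[R]_(m, n)) (x : 'cV[R]_n) :
  vnorm (A *m x) <= opnorm A * vnorm x.
Proof.
have [x0|xn0] := eqVneq (vnorm x) 0.
  by have := vnorm_mul_frob A x; rewrite x0 !mulr0.
have xpos : 0 < vnorm x by rewrite lt_def xn0 vnorm_ge0.
pose u := (vnorm x)^-1 *: x.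
have u1 : vnorm u = 1 by rewrite vnormZ ger0_norm ?invr_ge0 ?vnorm_ge0 // mulVf.
have bounded : has_sup [set vnorm (A *m y) | y in [set y : 'cV[R]_n | vnorm y = 1]].
  split; first by exists (vnorm (A *m u)); exists u.
  exists (frob A) => _ [y /= y1 <-].
  by have := vnorm_mul_frob A y; rewrite y1 mulr1.
have := sup_upper_bound bounded (ex_intro2 _ _ u u1 erefl).
rewrite -scalemxAr vnormZ ger0_norm ?invr_ge0 ?vnorm_ge0 //.
by rewrite -ler_pdivrMr // mulrC.
Qed.

Lemma normr_qform_le n (A : 'M[R]_n) (u w : 'cV[R]_n) :
  `|(u^T *m A *m w) 0 0| <= vnorm u * (opnorm A * vnorm w).
Proof.
rewrite -mulmxA; apply: le_trans (normr_dot_le _ _) _.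
exact/ler_wpM2l/vnorm_mul_opnorm/vnorm_ge0.
Qed.

Lemma qformZ n (A : 'M[R]_n) (c : R) (x : 'cV[R]_n) :
  qform A (c *: x) = c ^+ 2 * qform A x.
Proof.
have trZ : (c *: x)^T = c *: x^T by apply/matrixP => i j; rewrite !mxE.
by rewrite /qform trZ -scalemxAl -scalemxAr -scalemxAl !mxE mulrA -expr2.
Qed.

Lemma qformB_le n (A : 'M[R]_n) (x p : 'cV[R]_n) :
  vnorm x = 1 -> vnorm p = 1 ->
  qform A x - qform A p <= 2 * opnorm A * vnorm (x - p).
Proof.
move=> x1 p1.
have split_diff : qform A x - qform A p =
    (x^T *m A *m (x - p)) 0 0 + ((x - p)^T *m A *m p) 0 0.
  have E : x^T *m A *m x - p^T *m A *m p =
      x^T *m A *m (x - p) + (x - p)^T *m A *m p.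
    by rewrite mulmxBr linearB /= !mulmxBl addrA subrK.
  by move/matrixP/(_ 0 0): E; rewrite /qform !mxE => ->.
have := normr_qform_le A x (x - p); rewrite x1 mul1r => bound_xA.
have := normr_qform_le A (x - p) p; rewrite p1 mulr1 => bound_Ap.
rewrite split_diff.
have := ler_norm ((x^T *m A *m (x - p)) 0 0).
have := ler_norm (((x - p)^T *m A *m p) 0 0).
lra.
Qed.

Lemma signv_false K : signv R [ffun _ : 'I_K => false] = 1%:M.
Proof. by apply/matrixP => i j; rewrite !mxE ffunE; case: (i == j). Qed.

Lemma dF_attained d K (X Q : 'M[R]_(d, K)) :
  exists q, dF X Q = frob (X - Q *m signv R q).
Proof.
apply: (big_ind (fun t => exists q, t = frob (X - Q *m signv R q))).
- by exists [ffun=> false]; rewrite signv_false mulmx1.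
- move=> _ _ [q1 ->] [q2 ->].
  by case: leP => _; [exists q1 | exists q2].
- by move=> q _; exists q.
Qed.

Lemma col_mul_signv d K (Q : 'M[R]_(d, K)) q k :
  col k (Q *m signv R q) = (-1) ^+ q k *: col k Q.
Proof. by apply/matrixP => i j; rewrite mul_mx_diag !mxE mulrC; case: (q k). Qed.

Lemma qform_col_mul_signv d K (A : 'M[R]_d) (Q : 'M[R]_(d, K)) q k :
  qform A (col k (Q *m signv R q)) = qform A (col k Q).
Proof. by rewrite col_mul_signv qformZ sqrr_sign mul1r. Qed.

Lemma vnorm_col_mul_signv d K (Q : 'M[R]_(d, K)) q k :
  vnorm (col k (Q *m signv R q)) = vnorm (col k Q).
Proof. by rewrite col_mul_signv vnormZ normr_sign mul1r. Qed.

Lemma stiefel_col_vnorm d K (X : 'M[R]_(d, K)) k : stiefel X -> vnorm (col k X) = 1.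
Proof.
move/matrixP/(_ k k); rewrite !mxE eqxx /= => XtX.
rewrite /vnorm -sqrtr1; congr Num.sqrt; apply: etrans _ XtX.
by apply: eq_bigr => i _; rewrite !mxE expr2.
Qed.

Lemma sum_vnorm_col_le d K (X : 'M[R]_(d, K)) :
  \sum_k vnorm (col k X) <= Num.sqrt K%:R * frob X.
Proof.
have frobE : frob X = Num.sqrt (\sum_k vnorm (col k X) ^+ 2).
  rewrite /frob exchange_big /=; congr Num.sqrt; apply: eq_bigr => k _.
  by rewrite sqr_vnorm; apply: eq_bigr => i _; rewrite mxE.
apply: le_trans (ler_norm _) _.
have := normr_sum_mul_le (fun _ : 'I_K => 1) (fun k => vnorm (col k X)).
by rewrite frobE; under eq_bigr do rewrite mul1r; rewrite sumr_const card_ord expr1n.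
Qed.

Lemma sum_qformB_le d K (D : 'I_K -> 'M[R]_d) (X P : 'M[R]_(d, K)) :
  (forall k, vnorm (col k X) = 1) -> (forall k, vnorm (col k P) = 1) ->
  \sum_k (qform (D k) (col k X) - qform (D k) (col k P))
    <= 2 * \big[Num.max/0]_k opnorm (D k) * (Num.sqrt K%:R * frob (X - P)).
Proof.
move=> unitX unitP.
apply: le_trans (ler_wpM2l _ (sum_vnorm_col_le _)); last first.
  by rewrite mulr_ge0 // bigmax_ge_id.
rewrite mulr_sumr; apply: ler_sum => k _; rewrite linearB /=.
apply: le_trans (qformB_le _ (unitX k) (unitP k)) _.
by rewrite ler_wpM2r ?vnorm_ge0 ?ler_wpM2l ?le_bigmax.
Qed.

End Norms.

Lemma le_div_of_mul_sqr_le (R : realFieldType) (a c t : R) :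
  0 < a -> 0 <= c -> 0 <= t -> a * t ^+ 2 <= c * t -> t <= c / a.
Proof.
move=> a_gt0 c_ge0 t_ge0 sqr_le; rewrite ler_pdivlMr //.
have [->|t_neq0] := eqVneq t 0; first by rewrite mul0r.
have t_gt0 : 0 < t by rewrite lt_def t_neq0.
nra.
Qed.

Lemma dF_le_of_perturbed_argmax (R : realType) d K
    (g : 'M[R]_(d, K) -> R) (D : 'I_K -> 'M[R]_d) (Q X : 'M[R]_(d, K)) (eta : R) :
  stiefel Q -> stiefel X -> 0 < eta ->
  eta * dF X Q ^+ 2 <= g Q - g X ->
  g Q + \sum_k qform (D k) (col k Q) <= g X + \sum_k qform (D k) (col k X) ->
  dF X Q <= 2 * Num.sqrt K%:R / eta * \big[Num.max/0]_k opnorm (D k).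
Proof.
move=> stQ stX eta_gt0 growth opt.
have [q dFE] := dF_attained X Q; set Q' := Q *m signv R q in dFE.
have gap : g Q - g X <= \sum_k (qform (D k) (col k X) - qform (D k) (col k Q')).
  rewrite sumrB (eq_bigr _ (fun k _ => qform_col_mul_signv (D k) Q q k)); lra.
have unitQ' k : vnorm (col k Q') = 1.
  by rewrite vnorm_col_mul_signv stiefel_col_vnorm.
have perturb := sum_qformB_le D (fun k => stiefel_col_vnorm k stX) unitQ'.
rewrite mulrAC; apply: le_div_of_mul_sqr_le => //.
- by rewrite !mulr_ge0 ?sqrtr_ge0 ?bigmax_ge_id.
- by rewrite dFE frob_ge0.
have := le_trans growth (le_trans gap perturb); rewrite -dFE; nra.
Qed.

Theorem lemma8 (R : realType) (d K L : nat) (ns : 'I_L -> nat)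
  (v : 'I_L -> R) (lam : 'I_K -> R) (Q : 'M[R]_(d, K))
  (z : forall l : 'I_L, 'I_(ns l) -> 'cV[R]_K)
  (eta : forall l : 'I_L, 'I_(ns l) -> 'cV[R]_d)
  (etabar : R) (Xhat : 'M[R]_(d, K)) :
  (K < d)%N -> (1 <= K)%N -> (1 <= L)%N ->
  stiefel Q ->
  (forall i j : 'I_K, (i < j)%N -> lam j < lam i) ->
  (forall k, 0 < lam k) ->
  (forall l, 1 <= ns l)%N ->
  (forall i j : 'I_L, (i < j)%N -> v j < v i) ->
  (forall l, 0 < v l) ->
  0 < etabar ->
  (forall X : 'M[R]_(d, K), stiefel X ->
     gobj ns v lam Q Q - gobj ns v lam Q X >= etabar * dF X Q ^+ 2) ->
  stiefel Xhat ->
  (forall X : 'M[R]_(d, K), stiefel X ->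
     fobj ns v lam Q z eta X <= fobj ns v lam Q z eta Xhat) ->
  dF Xhat Q <= 2 * Num.sqrt (K%:R) / etabar *
     \big[Num.max/0]_(k < K) opnorm (Delta ns v lam Q z eta k).
Proof.
move=> _ _ _ stQ _ _ _ _ _ etabar_gt0 growth stXhat opt.
exact: (dF_le_of_perturbed_argmax (g := gobj ns v lam Q) (D := Delta ns v lam Q z eta))
  stQ stXhat etabar_gt0 (growth _ stXhat) (opt _ stQ).
Qed.
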